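(* Let $\mathfrak{g}$ be a finite-dimensional real Lie algebra and let $h\colon \mathfrak{g}^{*} \to \mathbb{R}$ be smooth. Fix a choice of sign $\pm$ and define $\mathbf{M}_{\pm}\colon T^{*}\mathfrak{g} = \mathfrak{g}\times\mathfrak{g}^{*} \to \mathfrak{g}^{*}$ by $\mathbf{M}_{\pm}(q,p) = \mp\operatorname{ad}_{q}^{*}p$, and $H\colon T^{*}\mathfrak{g} \to \mathbb{R}$ by $H(q,p) = h(\mathbf{M}_{\pm}(q,p)) = h(\mp\operatorname{ad}_{q}^{*}p)$. Let $t \mapsto (q(t),p(t))$ be a solution of the canonical Hamiltonian system $\dot{q} = \partial H/\partial p$, $\dot{p} = -\partial H/\partial q$ on $T^{*}\mathfrak{g} \cong T^{*}\mathbb{R}^{n}$. Then $t \mapsto \mu(t) := \mathbf{M}_{\pm}(q(t),p(t))$ is a solution of the Lie--Poisson equation $$\dot{\mu} = \mp\operatorname{ad}_{Dh(\mu)}^{*}\mu .$$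
   Context: $n = \dim\mathfrak{g}$; $\langle\cdot,\cdot\rangle$ is the natural pairing $\mathfrak{g}^{*}\times\mathfrak{g}\to\mathbb{R}$. For $x \in \mathfrak{g}$, $\operatorname{ad}_{x}y = [x,y]$ and $\operatorname{ad}_{x}^{*}\colon\mathfrak{g}^{*}\to\mathfrak{g}^{*}$ is its dual, $\langle \operatorname{ad}_{x}^{*}\alpha, y\rangle = \langle \alpha, [x,y]\rangle$. $T^{*}\mathfrak{g}$ is identified with $\mathfrak{g}\times\mathfrak{g}^{*}$ and carries the canonical symplectic structure; in a basis $\{E_i\}$ of $\mathfrak{g}$ with dual basis, $q = q^{i}E_i$, $p = p_i E^{i}_{*}$ and Hamilton's equations are $\dot q^{i} = \partial H/\partial p_i$, $\dot p_i = -\partial H/\partial q^{i}$. For smooth $f\colon\mathfrak{g}^{*}\to\mathbb{R}$, $Df(\mu)\in\mathfrak{g}$ is defined by $\langle \delta\mu, Df(\mu)\rangle = \frac{d}{ds}\big|_{s=0} f(\mu+s\delta\mu)$ for all $\delta\mu\in\mathfrak{g}^{*}$. The equation $\dot\mu = \mp\operatorname{ad}^{*}_{Dh(\mu)}\mu$ is the Hamiltonian equation of $h$ with respect to the $(\pm)$-Lie--Poisson bracket $\{f,g\}_{\pm}(\mu) = \pm\langle \mu, [Df(\mu), Dg(\mu)]\rangle$. *)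

From HB Require Import structures.
From mathcomp Require Import all_boot all_order all_algebra.
From mathcomp Require Import all_classical all_reals all_analysis.
Set Implicit Arguments. Unset Strict Implicit. Unset Printing Implicit Defensive.
Import Order.TTheory GRing.Theory Num.Theory.
Import numFieldNormedType.Exports.
Local Open Scope ring_scope.
Local Open Scope classical_set_scope.

(* g is identified with R^n = 'rV[R]_n via a basis {E_i}; g^* with 'rV[R]_n via
   the dual basis.  E_i is the standard basis vector. *)
Definition basis_vec (R : realType) (n : nat) (i : 'I_n) : 'rV[R]_n :=
  delta_mx 0 i.

Definition pairing (R : realType) (n : nat) (alpha x : 'rV[R]_n) : R :=
  \sum_(i < n) alpha 0 i * x 0 i.

Definition is_lie_bracket (R : realType) (n : nat)
    (br : 'rV[R]_n -> 'rV[R]_n -> 'rV[R]_n) : Prop :=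
  [/\ (forall (a : R) x y z, br (a *: x + y) z = a *: br x z + br y z),
      (forall (a : R) x y z, br z (a *: x + y) = a *: br z x + br z y),
      (forall x y, br x y = - br y x) &
      (forall x y z, br x (br y z) + br y (br z x) + br z (br x y) = 0)].

Definition adstar (R : realType) (n : nat)
    (br : 'rV[R]_n -> 'rV[R]_n -> 'rV[R]_n) (x alpha : 'rV[R]_n) : 'rV[R]_n :=
  \row_(j < n) pairing alpha (br x (basis_vec R j)).

(* Df(mu) in g: coordinates are the partial derivatives (directional
   derivatives along the dual basis vectors). *)
Definition Dfun (R : realType) (n : nat) (f : 'rV[R]_n -> R) (mu : 'rV[R]_n)
  : 'rV[R]_n :=
  \row_(i < n) ('D_(basis_vec R i) f mu).

Fixpoint Ck (R : realType) (n : nat) (k : nat) (f : 'rV[R]_n -> R) : Prop :=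
  match k with
  | 0 => continuous f
  | k'.+1 => (forall x, differentiable f x) /\
             (forall v : 'rV[R]_n, Ck k' (fun x => 'D_v f x))
  end.

Definition smooth (R : realType) (n : nat) (f : 'rV[R]_n -> R) : Prop :=
  forall k, Ck k f.

(* the sign: true <-> upper sign "+" in (pm), false <-> lower sign "-";
   sgn b = +1 / -1, so "mp" = - sgn b. *)
Definition sgn (R : realType) (b : bool) : R := if b then 1 else -1.

Definition Mmap (R : realType) (n : nat) (br : 'rV[R]_n -> 'rV[R]_n -> 'rV[R]_n)
    (b : bool) (q p : 'rV[R]_n) : 'rV[R]_n :=
  - sgn R b *: adstar br q p.

Definition Hcoll (R : realType) (n : nat) (br : 'rV[R]_n -> 'rV[R]_n -> 'rV[R]_n)
    (b : bool) (h : 'rV[R]_n -> R) (q p : 'rV[R]_n) : R :=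
  h (Mmap br b q p).

Definition hamiltonian_solution (R : realType) (n : nat)
    (H : 'rV[R]_n -> 'rV[R]_n -> R) (I : set R) (q p : R -> 'rV[R]_n) : Prop :=
  forall t, I t ->
    [/\ derivable q t 1, derivable p t 1,
        'D_1 q t = \row_(i < n) ('D_(basis_vec R i) (fun p' => H (q t) p') (p t)) &
        'D_1 p t = - \row_(i < n) ('D_(basis_vec R i) (fun q' => H q' (p t)) (q t))].

Definition lie_poisson_solution (R : realType) (n : nat)
    (br : 'rV[R]_n -> 'rV[R]_n -> 'rV[R]_n) (b : bool) (h : 'rV[R]_n -> R)
    (I : set R) (mu : R -> 'rV[R]_n) : Prop :=
  forall t, I t ->
    derivable mu t 1 /\ 'D_1 mu t = - sgn R b *: adstar br (Dfun h (mu t)) (mu t).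

(* With ξ = Dh(μ), differentiating h(∓ad*_q p) in p or in q pairs Dh(μ) with
   the bilinear map (q, p) ↦ ∓ad*_q p, so Hamilton's equations of the collective
   Hamiltonian read q̇ = ∓[q, ξ] and ṗ = ∓ad*_ξ p.  The product rule then gives
   μ̇ = ∓(ad*_q̇ p + ad*_q ṗ) = ad*_[q,ξ] p + ad*_q ad*_ξ p, and the Jacobi
   identity, in the form ad*_[x,y] = ad*_y ad*_x - ad*_x ad*_y, turns this into
   ad*_ξ ad*_q p = ∓ad*_ξ μ. *)

From HB Require Import structures.
From mathcomp Require Import all_boot all_order all_algebra.
From mathcomp Require Import all_classical all_reals all_analysis.
From mathcomp Require Import ring.
Set Implicit Arguments.
Unset Strict Implicit.
Unset Printing Implicit Defensive.

Import Order.TTheory GRing.Theory Num.Theory.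
Import numFieldNormedType.Exports.
Local Open Scope ring_scope.

Section Pairing.
Variables (R : realType) (n : nat).
Implicit Types (al be x : 'rV[R]_n).

Lemma pairingC al x : pairing al x = pairing x al.
Proof. by apply: eq_bigr => i _; rewrite mulrC. Qed.

Lemma pairing_is_linear al : scalar (pairing al).
Proof.
move=> a x y; rewrite /pairing mulr_sumr -big_split; apply: eq_bigr => i _.
by rewrite !mxE mulrDr mulrCA.
Qed.

HB.instance Definition _ al :=
  GRing.isLinear.Build R 'rV[R]_n R *%R (pairing al) (pairing_is_linear al).

Lemma pairing_basis al j : pairing al (basis_vec R j) = al 0 j.
Proof.
rewrite /pairing (bigD1 j) //= big1 ?addr0; first by rewrite mxE !eqxx mulr1.
by move=> i /negbTE ij; rewrite mxE ij andbF mulr0.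
Qed.

Lemma eq_row_pairing al be : (forall x, pairing al x = pairing be x) -> al = be.
Proof. by move=> eq_al_be; apply/rowP => j; rewrite -!pairing_basis. Qed.

End Pairing.

Section LinearRow.
Variables (R : realType) (m : nat) (V : lmodType R) (L : 'rV[R]_m -> V).
Hypothesis L_lin : linear L.

Lemma linear_row_expand x : L x = \sum_j x 0 j *: L (basis_vec R j).
Proof.
have L0 : L 0 = 0 by rewrite -[0 in LHS](subrr 0) (zmod_morphism_linear L_lin) subrr.
rewrite {1}(row_sum_delta x).
by elim/big_rec2: _ => [|j y1 y2 _ <-] //; rewrite L_lin.
Qed.

End LinearRow.

Section Coadjoint.
Variables (R : realType) (n : nat) (br : 'rV[R]_n -> 'rV[R]_n -> 'rV[R]_n).

Lemma adstar_is_linear x : linear (adstar br x).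
Proof.
move=> a al be; apply/rowP => j.
by rewrite !mxE pairingC linearP /= -!(pairingC (br x _)).
Qed.

HB.instance Definition _ x :=
  GRing.isLinear.Build R 'rV[R]_n 'rV[R]_n *:%R (adstar br x) (adstar_is_linear x).

End Coadjoint.

Section LieAlgebra.
Variables (R : realType) (n : nat) (br : 'rV[R]_n -> 'rV[R]_n -> 'rV[R]_n).
Hypothesis br_lie : is_lie_bracket br.
Implicit Types (al x y z : 'rV[R]_n).

Lemma lie_br_linearl y : linear (br^~ y).
Proof. by case: br_lie => br_lin _ _ _ a x z; apply: br_lin. Qed.

Lemma lie_br_linearr x : linear (br x).
Proof. by case: br_lie => _ br_lin _ _ a y z; apply: br_lin. Qed.

HB.instance Definition _ x :=
  GRing.isLinear.Build R 'rV[R]_n 'rV[R]_n *:%R (br x) (lie_br_linearr x).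

Lemma lie_br_anti x y : br x y = - br y x.
Proof. by case: br_lie. Qed.

Lemma lie_br_derivation x y z : br (br x y) z = br x (br y z) - br y (br x z).
Proof.
case: br_lie => _ _ _ jacobi; have /eqP := jacobi x y z.
rewrite (lie_br_anti z (br x y)) (lie_br_anti z x) linearN /=.
by rewrite subr_eq0 eq_sym => /eqP.
Qed.

Lemma adstar_pairing x al y : pairing (adstar br x al) y = pairing al (br x y).
Proof.
rewrite [in RHS](linear_row_expand (lie_br_linearr x)) linear_sum /= pairingC.
by apply: eq_bigr => j _; rewrite linearZ /= mxE mulrC.
Qed.

Lemma adstar_linearl al : linear (adstar br ^~ al).
Proof.
move=> a x y; apply/rowP => j; rewrite !mxE.
by rewrite (lie_br_linearl (basis_vec R j)) linearP.
Qed.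

Lemma adstarZl a x al : adstar br (a *: x) al = a *: adstar br x al.
Proof. exact: (scalable_linear (adstar_linearl al)). Qed.

Lemma adstar_br x y al :
  adstar br (br x y) al =
  adstar br y (adstar br x al) - adstar br x (adstar br y al).
Proof.
apply: eq_row_pairing => z; rewrite adstar_pairing lie_br_derivation [RHS]pairingC.
by rewrite !linearB /= !(pairingC z) !adstar_pairing.
Qed.

End LieAlgebra.

Section DirectionalDerivative.
Variables (R : numFieldType) (U V W : normedModType R).

Lemma derive_comp_linear (f : V -> W) (L : U -> V) : linear L ->
  forall x v, 'D_v (fun y => f (L y)) x = 'D_(L v) f (L x).
Proof.
by move=> L_lin x v; rewrite /derive /=; under eq_fun do rewrite L_lin.
Qed.

End DirectionalDerivative.

Lemma derive_pairing_Dfun (R : realType) n (h : 'rV[R]_n -> R) mu w :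
  differentiable h mu -> 'D_w h mu = pairing w (Dfun h mu).
Proof.
move=> dh; rewrite deriveE // {1}(row_sum_delta w) linear_sum.
by apply: eq_bigr => j _; rewrite linearZ /= mxE deriveE.
Qed.

Section MatrixCurves.
Variables (R : realFieldType) (V : normedModType R) (m k : nat).
Variables (M : V -> 'M[R]_(m, k)) (t v : V).

Lemma is_derive_mx (dM : 'M[R]_(m, k)) :
  (forall i j, is_derive t v (fun s => M s i j) (dM i j)) -> is_derive t v M dM.
Proof.
move=> dMij; have dM_t : derivable M t v.
  by apply/derivable_mxP => i j; exact: (dMij i j).(ex_derive).
apply: DeriveDef => //; rewrite derive_mx //; apply/matrixP => i j.
by rewrite mxE derive_val.
Qed.

Lemma is_derive_mx_entry i j :
  derivable M t v -> is_derive t v (fun s => M s i j) ('D_v M t i j).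
Proof.
move=> dM_t; rewrite derive_mx // mxE; apply: derivableP.
by move/derivable_mxP: dM_t; apply.
Qed.

End MatrixCurves.

Section BilinearCurves.
Variables (R : realType) (m n k : nat).
Variable F : 'rV[R]_m -> 'rV[R]_n -> 'rV[R]_k.
Hypotheses (F_linl : forall y, linear (F^~ y)) (F_linr : forall x, linear (F x)).

Lemma bilinear_row_expand x y :
  F x y = \sum_i \sum_j (x 0 i * y 0 j) *: F (basis_vec R i) (basis_vec R j).
Proof.
rewrite (linear_row_expand (F_linl y)); apply: eq_bigr => i _.
rewrite (linear_row_expand (F_linr _)) scaler_sumr; apply: eq_bigr => j _.
by rewrite scalerA.
Qed.

Lemma is_derive_bilinear (x : R -> 'rV[R]_m) (y : R -> 'rV[R]_n) t :
  derivable x t 1 -> derivable y t 1 ->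
  is_derive t 1 (fun s => F (x s) (y s)) (F ('D_1 x t) (y t) + F (x t) ('D_1 y t)).
Proof.
move=> dx dy; apply: is_derive_mx => i l; rewrite [i]ord1.
pose c a b := F (basis_vec R a) (basis_vec R b) 0 l.
have F_entry x' y' : F x' y' 0 l = \sum_a \sum_b x' 0 a * y' 0 b * c a b.
  rewrite bilinear_row_expand summxE; apply: eq_bigr => a _.
  by rewrite summxE; apply: eq_bigr => b _; rewrite mxE.
have -> : (fun s => F (x s) (y s) 0 l) =
    \sum_a \sum_b (fun s => x s 0 a * y s 0 b * c a b).
  apply/funext => s; rewrite F_entry fct_sumE; apply: eq_bigr => a _.
  by rewrite fct_sumE.
rewrite mxE !F_entry -big_split; apply: is_derive_sum => a /=.
rewrite -big_split; apply: is_derive_sum => b /=.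
apply: is_derive_eq.
  by apply: is_deriveM; apply: is_deriveM; apply: is_derive_mx_entry.
by rewrite /= scaler0 add0r /GRing.scale /=; ring.
Qed.

End BilinearCurves.

Section CollectiveHamiltonian.
Variables (R : realType) (n : nat) (br : 'rV[R]_n -> 'rV[R]_n -> 'rV[R]_n).
Variables (b : bool) (h : 'rV[R]_n -> R).
Hypothesis br_lie : is_lie_bracket br.
Implicit Types (q p : 'rV[R]_n).

Lemma Mmap_linearr q : linear (Mmap br b q).
Proof. by move=> a p p'; rewrite /Mmap linearP scalerDr !scalerA mulrC. Qed.

Lemma Mmap_linearl p : linear (Mmap br b ^~ p).
Proof.
by move=> a q q'; rewrite /Mmap (adstar_linearl br_lie) scalerDr !scalerA mulrC.
Qed.

Lemma Hcoll_gradp q p : differentiable h (Mmap br b q p) ->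
  \row_i 'D_(basis_vec R i) (Hcoll br b h q) p =
  - sgn R b *: br q (Dfun h (Mmap br b q p)).
Proof.
move=> dh; apply/rowP => i; rewrite !mxE /Hcoll.
rewrite (derive_comp_linear h (Mmap_linearr q)) derive_pairing_Dfun //.
rewrite /Mmap pairingC linearZ /= pairingC (adstar_pairing br_lie).
by rewrite pairingC pairing_basis.
Qed.

Lemma Hcoll_gradq q p : differentiable h (Mmap br b q p) ->
  \row_i 'D_(basis_vec R i) (Hcoll br b h ^~ p) q =
  sgn R b *: adstar br (Dfun h (Mmap br b q p)) p.
Proof.
move=> dh; apply/rowP => i; rewrite !mxE /Hcoll.
rewrite (derive_comp_linear h (Mmap_linearl p)) derive_pairing_Dfun //.
rewrite /Mmap pairingC linearZ /= pairingC (adstar_pairing br_lie).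
by rewrite (lie_br_anti br_lie) linearN /= mulrN mulNr opprK.
Qed.

Lemma is_derive_Mmap (q p : R -> 'rV[R]_n) t :
  derivable q t 1 -> derivable p t 1 ->
  is_derive t 1 (fun s => Mmap br b (q s) (p s))
    (- sgn R b *: (adstar br ('D_1 q t) (p t) + adstar br (q t) ('D_1 p t))).
Proof.
move=> dq dp; apply: is_deriveZ.
exact: (is_derive_bilinear (adstar_linearl br_lie) (@adstar_is_linear _ _ br)).
Qed.

End CollectiveHamiltonian.

Theorem theorem3p1 (R : realType) (n : nat)
    (br : 'rV[R]_n -> 'rV[R]_n -> 'rV[R]_n) (b : bool) (h : 'rV[R]_n -> R)
    (I : set R) (q p : R -> 'rV[R]_n) :
  is_lie_bracket br -> smooth h -> open I ->
  hamiltonian_solution (Hcoll br b h) I q p ->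
  lie_poisson_solution br b h I (fun t => Mmap br b (q t) (p t)).
Proof.
move=> br_lie h_smooth _ qp_ham t It.
have [dq dp q_eq p_eq] := qp_ham t It.
have [dh _] := h_smooth 1%N.
have dmu := is_derive_Mmap b br_lie dq dp.
split; first exact: dmu.(ex_derive).
rewrite dmu.(derive_val) q_eq p_eq.
rewrite (Hcoll_gradp br_lie (dh _)) (Hcoll_gradq br_lie (dh _)).
set xi := Dfun h _; rewrite /Mmap (adstarZl br_lie) !linearN !linearZ /=.
rewrite (adstar_br br_lie).
by congr (_ *: _); rewrite scalerBr scalerN !scaleNr opprK addrK.
Qed.
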